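(* Let $\mathcal P_{XY}$ be any distribution on $\mathbb R^p\times\mathbb R$ and let $Z_i=(X_i,Y_i)$, $i=1,\dots,n+1$, be i.i.d. from $\mathcal P_{XY}$. Let $\mathcal Z,\mathcal X$ be the unordered sets $\{Z_1,\dots,Z_{n+1}\}$, $\{X_1,\dots,X_{n+1}\}$; let $V(z)=V(z;\mathcal Z)$ be a real-valued score function depending on the data only through $\mathcal Z$, with $V_i=V(Z_i;\mathcal Z)$; let $H:\mathbb R^p\times\mathbb R^p\to[0,1]$ be a localizer depending on the data only through $\mathcal X$, with $H(x,x)=1$. Put $H_{ij}=H(X_i,X_j)$, $p^H_{ij}=H_{ij}/\sum_{k=1}^{n+1}H_{ik}$, $\hat{\mathcal F}_i=\sum_{j=1}^{n+1}p^H_{ij}\delta_{V_j}$, $\hat{\mathcal F}=\sum_{j=1}^{n}p^H_{n+1,j}\delta_{V_j}+p^H_{n+1,n+1}\delta_{+\infty}$ and $\Gamma=\{\sum_{k\in I}p^H_{ik}: i\in\{1,\dots,n+1\},\ I\subseteq\{1,\dots,n+1\}\}$. Fix $\alpha\in(0,1)$. Let $\tilde\alpha_1$ be the smallest value and $\tilde\alpha_2$ the largest value in $\Gamma\cup\{0\}$ such that, respectively, $$\alpha_1:=\frac{1}{n+1}\sum_{i=1}^{n+1}\mathbb 1\{V_i\le Q(\tilde\alpha_1;\hat{\mathcal F}_i)\}\ge\alpha,\qquad \alpha_2:=\frac{1}{n+1}\sum_{i=1}^{n+1}\mathbb 1\{V_i\le Q(\tilde\alpha_2;\hat{\mathcal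 F}_i)\}<\alpha.$$ Let $\tilde\alpha=\tilde\alpha_1$ with probability $\frac{\alpha-\alpha_2}{\alpha_1-\alpha_2}$ and $\tilde\alpha=\tilde\alpha_2$ with probability $\frac{\alpha_1-\alpha}{\alpha_1-\alpha_2}$, using randomization independent of everything else. Then $\mathbb P\{V_{n+1}\le Q(\tilde\alpha;\hat{\mathcal F})\}=\alpha$.
   Context: For a distribution $\mathcal F$ on $\mathbb R\cup\{\pm\infty\}$, $Q(\alpha;\mathcal F)=\inf\{t:\mathbb P_{T\sim\mathcal F}(T\le t)\ge\alpha\}$ (so $Q(0;\mathcal F)=-\infty$). $\delta_v$ is the point mass at $v$. *)

From HB Require Import structures.
From mathcomp Require Import all_boot all_order all_algebra all_fingroup.
From mathcomp Require Import all_classical all_reals all_analysis.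
Set Implicit Arguments. Unset Strict Implicit. Unset Printing Implicit Defensive.
Import Order.TTheory GRing.Theory Num.Theory.
Local Open Scope classical_set_scope.
Local Open Scope ring_scope.

Section Defs.
Variable R : realType.

(* cdf at t of the discrete distribution sum_j w j * delta_(v j), values in \bar R *)
Definition discr_cdf (m : nat) (w : 'I_m -> R) (v : 'I_m -> \bar R) (t : \bar R) : R :=
  \sum_(j < m | (v j <= t)%E) w j.

Definition Qd (m : nat) (w : 'I_m -> R) (v : 'I_m -> \bar R) (a : R) : \bar R :=
  ereal_inf [set t : \bar R | a <= discr_cdf w v t].

Definition pH (m : nat) (h : 'I_m -> 'I_m -> R) (i j : 'I_m) : R :=
  h i j / \sum_(k < m) h i k.

Definition Gamma (m : nat) (pm : 'I_m -> 'I_m -> R) : set R :=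
  [set x | exists (i : 'I_m) (I : {set 'I_m}), x = \sum_(k in I) pm i k].

Definition cov_frac (m : nat) (v : 'I_m -> R) (pm : 'I_m -> 'I_m -> R) (a : R) : R :=
  (\sum_(i < m) ((((v i)%:E <= Qd (pm i) (fun j => (v j)%:E) a)%E : bool) : nat)%:R)
  / m%:R.

(* Fhat = sum_(j<=n) p_(n+1,j) delta_(V_j) + p_(n+1,n+1) delta_(+oo): values *)
Definition vals_inf (n : nat) (v : 'I_n.+1 -> R) (j : 'I_n.+1) : \bar R :=
  if j == ord_max then +oo%E else (v j)%:E.

(* generating rectangles of the Borel sigma-algebra on the data space (R^p x R)^(n+1) *)
Definition data_rects (n p : nat) : set (set ('I_n.+1 -> 'rV[R]_p * R)) :=
  [set S | exists (A : 'I_n.+1 -> 'I_p -> set R) (B : 'I_n.+1 -> set R),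
     (forall i k, measurable (A i k)) /\ (forall i, measurable (B i)) /\
     S = [set z : 'I_n.+1 -> 'rV[R]_p * R | forall i, (forall k, A i k ((z i).1 ord0 k)) /\ B i (z i).2]].

Definition xdata_rects (n p : nat) : set (set ('I_n.+1 -> 'rV[R]_p)) :=
  [set S | exists (A : 'I_n.+1 -> 'I_p -> set R),
     (forall i k, measurable (A i k)) /\
     S = [set z : 'I_n.+1 -> 'rV[R]_p | forall i k, A i k (z i ord0 k)]].

Definition data_measurable (n p : nat) (f : ('I_n.+1 -> 'rV[R]_p * R) -> R) :=
  forall C : set R, measurable C -> <<s @data_rects n p >> (f @^-1` C).

Definition xdata_measurable (n p : nat) (f : ('I_n.+1 -> 'rV[R]_p) -> R) :=
  forall C : set R, measurable C -> <<s @xdata_rects n p >> (f @^-1` C).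

Definition Zevent d (Omega : measurableType d) (n p : nat)
  (X : 'I_n.+1 -> Omega -> 'rV[R]_p) (Y : 'I_n.+1 -> Omega -> R)
  (i : 'I_n.+1) (A : 'I_p -> set R) (B : set R) : set Omega :=
  [set w | (forall k, A k (X i w ord0 k)) /\ B (Y i w)].

End Defs.

From HB Require Import structures.
From mathcomp Require Import all_boot all_order all_algebra all_fingroup.
From mathcomp Require Import all_classical all_reals all_analysis.
From mathcomp Require Import measurable_realfun ring.
Import Order.TTheory GRing.Theory Num.Theory numFieldNormedType.Exports.
Local Open Scope classical_set_scope.
Local Open Scope ring_scope.

(* Write s_i for the mass that Fhat_i puts strictly below V_i.  With nonnegative weights,
   V_i <= Q(a; Fhat_i) iff s_i < a, and V_(n+1) <= Q(a; Fhat) iff s_(n+1) < a since the atom at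
   +oo never lies below V_(n+1); so alpha_1 and alpha_2 are the fractions of indices i with s_i
   below tilde-alpha_1 and tilde-alpha_2.  The scores, the weights, Gamma and hence both levels
   are symmetric functions of the data.  By exchangeability, on the event that
   (alpha_1, alpha_2) = (k1, k2)/(n+1), the last index has s_(n+1) < tilde-alpha_1 with
   probability k1/(n+1) and s_(n+1) < tilde-alpha_2 with probability k2/(n+1).  The independent
   uniform U selects tilde-alpha_1 with probability c = (alpha - alpha_2)/(alpha_1 - alpha_2),
   and c k1/(n+1) + (1 - c) k2/(n+1) = alpha. *)

Lemma ler_sum_subpred (R : numDomainType) (I : finType) (w : I -> R) (P Q : pred I) :
  (forall j, 0 <= w j) -> subpred P Q -> \sum_(j | P j) w j <= \sum_(j | Q j) w j.
Proof.
move=> w0 PQ; rewrite [leLHS]big_mkcond [leRHS]big_mkcond; apply: ler_sum => j _.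
by case: ifPn => [/PQ ->|_]; [|case: ifP].
Qed.

Lemma le_QdE (R : realType) (m : nat) (w : 'I_m -> R) (v : 'I_m -> \bar R) (a x : R) :
  (forall j, 0 <= w j) ->
  (x%:E <= Qd w v a)%E = (\sum_(j < m | (v j < x%:E)%E) w j < a).
Proof.
move=> w0; apply/idP/idP => [xQ|below_lt].
- rewrite ltNge; apply/negP => a_le.
  pose t := \big[Order.max/-oo%E]_(j < m | (v j < x%:E)%E) v j.
  have tx : (t < x%:E)%E.
    by rewrite /t; elim/big_ind: _ => [|y1 y2|j ->]; rewrite ?ltNyr ?gt_max => // -> ->.
  have Qt : (Qd w v a <= t)%E.
    apply: ereal_inf_lbound; apply: (le_trans a_le); apply: ler_sum_subpred => // j vj.
    by rewrite /t (bigD1 j) //= le_max lexx.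
  by move: (le_lt_trans (le_trans xQ Qt) tx); rewrite ltxx.
- apply: le_ereal_inf_tmp => t /= a_le; rewrite leNgt; apply/negP => tx.
  have : discr_cdf w v t <= \sum_(j < m | (v j < x%:E)%E) w j.
    by apply: ler_sum_subpred => // j vt; exact: le_lt_trans vt tx.
  by move/(le_trans a_le)/le_lt_trans/(_ below_lt); rewrite ltxx.
Qed.

Section measure_lemmas.
Context {d} {T : measurableType d} {R : realType}.

Lemma measure_sum_indic (mu : {measure set T -> \bar R}) [I : finType]
    [A : I -> set T] [B : set T] [c : R] :
  0 <= c -> (forall i, measurable (A i)) -> measurable B ->
  (forall x, \sum_i \1_(A i) x = c * \1_B x) ->
  (\sum_i mu (A i) = c%:E * mu B)%E.
Proof.
move=> c0 mA mB sumA.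
have mind (E : set T) : measurable E -> measurable_fun setT (fun x => (\1_E x)%:E : \bar R).
  by move=> mE; apply/measurable_EFinP; exact: measurable_indic.
have ind0 (E : set T) x : (0 <= (\1_E x)%:E)%E by rewrite lee_fin indicE.
transitivity (\sum_i \int[mu]_x (\1_(A i) x)%:E)%E.
  by apply: eq_bigr => i _; rewrite integral_indic // setIT.
rewrite -ge0_integral_sum //; last by move=> i; exact: mind.
under eq_integral do rewrite sumEFin sumA EFinM.
by rewrite ge0_integralZl_EFin // ?integral_indic ?setIT //; exact: mind.
Qed.

Lemma sum_indic_unique [I : finType] (A : I -> set T) (B : set T) (x : T) (i0 : I) :
  (forall i, A i x -> i = i0) -> (A i0 x <-> B x) -> \sum_i \1_(A i) x = \1_B x :> R.
Proof.
move=> uniq_i0 AB; rewrite (bigD1 i0) //= big1 ?addr0 => [|i i_ne].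
- have [Bx|nBx] := pselect (B x); rewrite !indicE.
    by rewrite !mem_set //; exact/AB.
  by rewrite !memNset // => /AB.
- by rewrite indicE memNset // => /uniq_i0 i_eq; rewrite i_eq eqxx in i_ne.
Qed.

Lemma EFin_fine_prob (P : probability T R) [A : set T] :
  measurable A -> (fine (P A))%:E = P A.
Proof. by move=> mA; rewrite fineK ?fin_num_measure. Qed.

Lemma prob_preimage_setI_factor [d'] [T' : measurableType d'] (P : probability T R)
    [G : set (set T')] [f g : T -> T'] [D : set T] :
  d'.-measurable = <<s G >> -> setI_closed G -> G setT ->
  measurable_fun setT f -> measurable_fun setT g -> measurable D ->
  (forall S, G S -> P (f @^-1` S `&` D) = (P (g @^-1` S) * P D)%E) ->
  forall S, measurable S -> P (f @^-1` S `&` D) = (P (g @^-1` S) * P D)%E.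
Proof.
move=> mG GI GT mf mg mD onG S mS.
have PD := esym (EFin_fine_prob P mD).
pose c := NngNum (fine_ge0 (measure_ge0 P D)).
have := @measure_unique _ _ _ G (fun=> setT) mG GI (fun=> GT) (bigcup_const _ _)
  (pushforward (mrestr P mD) f) (mscale c (pushforward P g)).
move=> /(_ (ex_intro _ 0%N I) mf mg) eqm; rewrite muleC PD; apply: eqm => // [A GA|k].
- by transitivity (P (f @^-1` A `&` D)); rewrite // onG // muleC PD.
- change (P (f @^-1` setT `&` D) < +oo)%E; rewrite preimage_setT setTI.
  exact: le_lt_trans (probability_le1 P mD) (ltry _).
Qed.

End measure_lemmas.

Definition data (R : realType) (n p : nat) := ('I_n.+1 -> 'rV[R]_p * R)%type.
HB.instance Definition _ (R : realType) n p := Choice.on (data R n p).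
HB.instance Definition _ (R : realType) n p := isPointed.Build (data R n p) (fun _ => (0, 0)).
Definition data_mtype (R : realType) n p :=
  g_sigma_algebraType (@data_rects R n p : set (set (data R n p))).

Lemma data_rects_setI_closed {R : realType} {n p : nat} : setI_closed (@data_rects R n p).
Proof.
move=> _ _ [A1 [B1 [mA1 [mB1 ->]]]] [A2 [B2 [mA2 [mB2 ->]]]].
exists (fun i k => A1 i k `&` A2 i k), (fun i => B1 i `&` B2 i).
split; first by move=> i k; exact: measurableI.
split; first by move=> i; exact: measurableI.
apply/seteqP; split => z /=.
- move=> [h1 h2] i; split => [k|]; split.
  + exact: (h1 i).1.
  + exact: (h2 i).1.
  + exact: (h1 i).2.
  + exact: (h2 i).2.
- move=> h; split => i; have [hA hB] := h i; split => [k|].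
  + by case: (hA k).
  + by case: hB.
  + by case: (hA k).
  + by case: hB.
Qed.

Lemma data_rects_setT {R : realType} {n p : nat} : @data_rects R n p setT.
Proof.
exists (fun _ _ => setT), (fun _ => setT); do 2 split => //.
by apply/seteqP; split.
Qed.

Definition xdata (R : realType) (n p : nat) := ('I_n.+1 -> 'rV[R]_p)%type.
HB.instance Definition _ (R : realType) n p := Choice.on (xdata R n p).
HB.instance Definition _ (R : realType) n p := isPointed.Build (xdata R n p) (fun _ => 0).
Definition xdata_mtype (R : realType) n p :=
  g_sigma_algebraType (@xdata_rects R n p : set (set (xdata R n p))).

Section data_maps.
Context {R : realType} {n p : nat} {d} {Omega : measurableType d}.
Variables (X : 'I_n.+1 -> Omega -> 'rV[R]_p) (Y : 'I_n.+1 -> Omega -> R).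
Hypothesis X_meas : forall i k, measurable_fun setT (fun w => X i w ord0 k).
Hypothesis Y_meas : forall i, measurable_fun setT (Y i).

Definition data_of (w : Omega) : data_mtype R n p := fun i => (X i w, Y i w).

Lemma measurable_Zevent i A B :
  (forall k, measurable (A k)) -> measurable B -> measurable (Zevent X Y i A B).
Proof.
move=> mA mB.
rewrite (_ : Zevent X Y i A B =
    \bigcap_(k in [set: 'I_p]) ((fun w => X i w ord0 k) @^-1` A k) `&` Y i @^-1` B).
  apply: measurableI; last by rewrite -[E in measurable E]setTI; exact: Y_meas.
  apply: fin_bigcap_measurable => // k _.
  by rewrite -[E in measurable E]setTI; exact: X_meas.
by apply/seteqP; split => w /= [h1 h2]; split => // k; [move=> _|]; exact: h1.
Qed.

Lemma data_of_preimage_rect (A : 'I_n.+1 -> 'I_p -> set R) (B : 'I_n.+1 -> set R) :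
  data_of @^-1` [set z : data R n p | forall i, (forall k, A i k ((z i).1 ord0 k)) /\ B i (z i).2] =
  \bigcap_(i in [set: 'I_n.+1]) Zevent X Y i (A i) (B i).
Proof. by apply/seteqP; split => w /= h i; [move=> _|]; exact: h. Qed.

Lemma measurable_data_of : measurable_fun setT data_of.
Proof.
apply: measurability; first by [].
move=> _ [_ [A [B [mA [mB ->]]]] <-]; rewrite setTI data_of_preimage_rect.
by apply: fin_bigcap_measurable => // i _; exact: measurable_Zevent.
Qed.

End data_maps.

Lemma measurable_set_bool d (T : measurableType d) (b : T -> bool) :
  measurable_fun setT b -> measurable [set x | b x].
Proof. by move=> mb; have := mb measurableT [set true] I; rewrite setTI. Qed.

Lemma measurable_funV_ge1 d (T : measurableType d) (R : realType) (f : T -> R) :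
  (forall x, 1 <= f x) -> measurable_fun setT f -> measurable_fun setT (fun x => (f x)^-1).
Proof.
move=> f1 mf; rewrite (_ : (fun x => _) = (fun y => (Num.max y 1)^-1) \o f); last first.
  by apply: funext => x /=; rewrite max_l.
apply: measurableT_comp mf; apply: continuous_measurable_fun => y.
apply: (continuousV (s := fun y : R => Num.max y 1)).
  by rewrite gt_eqF // (lt_le_trans ltr01) // le_max lexx orbT.
exact: (@continuous_max R R id (fun _ => 1)) (cvg_id) (cvg_cst _).
Qed.

Section scores.
Context {R : realType} {n p : nat}.
Variable V : ('I_n.+1 -> 'rV[R]_p * R) -> 'rV[R]_p * R -> R.
Hypothesis V_perm : forall (s : 'S_n.+1) z t, V (z \o s) t = V z t.
Variable H : ('I_n.+1 -> 'rV[R]_p) -> 'rV[R]_p -> 'rV[R]_p -> R.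
Hypothesis H_perm : forall (s : 'S_n.+1) xs x x', H (xs \o s) x x' = H xs x x'.
Hypothesis H_ge0 : forall xs x x', 0 <= H xs x x'.
Hypothesis H_diag : forall xs x, H xs x x = 1.

Local Notation D := ('I_n.+1 -> 'rV[R]_p * R)%type.
Local Notation cand := (option ('I_n.+1 * {set 'I_n.+1})).

Definition score (z : D) (j : 'I_n.+1) : R := V z (z j).
Definition loc (z : D) (i j : 'I_n.+1) : R := H (fun k => (z k).1) (z i).1 (z j).1.
Definition weight (z : D) := pH (loc z).
Definition mass_below (z : D) (i : 'I_n.+1) : R :=
  \sum_(j < n.+1 | score z j < score z i) weight z i j.
Definition nbelow (z : D) (g : R) : nat := \sum_(i < n.+1) ((mass_below z i < g)%R : bool).
Definition coverage (z : D) := cov_frac (score z) (weight z).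

Lemma loc_sum_ge1 z i : 1 <= \sum_(k < n.+1) loc z i k.
Proof.
by rewrite (bigD1 i) //= {1}/loc H_diag lerDl; apply: sumr_ge0 => k _; exact: H_ge0.
Qed.

Lemma weight_ge0 z i j : 0 <= weight z i j.
Proof. by rewrite divr_ge0 ?H_ge0 // (le_trans ler01 (loc_sum_ge1 z i)). Qed.

Lemma nbelow_le z g : (nbelow z g <= n.+1)%N.
Proof.
rewrite -[X in (_ <= X)%N]card_ord -sum1_card.
by apply: leq_sum => i _; case: (_ < _).
Qed.

Lemma coverageE z g : coverage z g = (nbelow z g)%:R / n.+1%:R.
Proof.
rewrite /coverage /cov_frac natr_sum; congr (_ / _); apply: eq_bigr => i _.
rewrite le_QdE; last exact: weight_ge0.
by under eq_bigl do rewrite lte_fin.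
Qed.

Lemma mass_below_vals_inf z :
  \sum_(j < n.+1 | (vals_inf (score z) j < (score z ord_max)%:E)%E) weight z ord_max j =
  mass_below z ord_max.
Proof.
apply: eq_bigl => j; rewrite /vals_inf; case: eqP => [->|_]; last by rewrite lte_fin.
by rewrite ltxx ltNge leey.
Qed.

Section permutation.
Variable s : 'S_n.+1.

Lemma score_perm z j : score (z \o s) j = score z (s j).
Proof. exact: V_perm. Qed.

Lemma loc_perm z i j : loc (z \o s) i j = loc z (s i) (s j).
Proof. by rewrite /loc -(H_perm s (fun k => (z k).1)). Qed.

Lemma weight_perm z i j : weight (z \o s) i j = weight z (s i) (s j).
Proof.
rewrite /weight /pH loc_perm [in RHS](reindex_inj (@perm_inj _ s)) /=.
by under eq_bigr do rewrite loc_perm.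
Qed.

Lemma mass_below_perm z i : mass_below (z \o s) i = mass_below z (s i).
Proof.
rewrite /mass_below [RHS](reindex_inj (@perm_inj _ s)) /=.
by apply: eq_big => [j|j _]; rewrite ?score_perm ?weight_perm.
Qed.

Lemma nbelow_perm z g : nbelow (z \o s) g = nbelow z g.
Proof.
rewrite /nbelow [RHS](reindex_inj (@perm_inj _ s)) /=.
by under eq_bigr do rewrite mass_below_perm.
Qed.

Lemma coverage_perm z : coverage (z \o s) = coverage z.
Proof. by apply: funext => g; rewrite !coverageE nbelow_perm. Qed.

End permutation.

(* Gamma u {0}, indexed by a finite type with None standing for 0, so that selecting a level
   only involves finite unions of measurable sets. *)
Definition level (z : D) (c : cand) : R :=
  if c is Some (i, A) then \sum_(k in A) weight z i k else 0.

Definition is_level (z : D) (g : R) := exists c, g = level z c.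

Lemma is_levelE z g : (Gamma (weight z) `|` [set 0]) g <-> is_level z g.
Proof.
split=> [[[i [A ->]]|->]|[[[i A]|] ->]].
- by exists (Some (i, A)).
- by exists None.
- by left; exists i, A.
- by right.
Qed.

Lemma is_level_perm (s : 'S_n.+1) z : is_level (z \o s) = is_level z.
Proof.
have level_perm (t : 'S_n.+1) z' c : exists c', level (z' \o t) c = level z' c'.
  case: c => [[i A]|]; last by exists None.
  exists (Some (t i, t @: A)); rewrite /= big_imset /=; last exact: in2W (@perm_inj _ t).
  by under eq_bigr do rewrite weight_perm.
apply/funext => g; apply/propext; split=> -[c ->].
- by have [c' ->] := level_perm s z c; exists c'.
- have [c' e] := level_perm s^-1%g (z \o s) c.
  by exists c'; rewrite -e; congr level; apply/funext => i /=; rewrite permKV.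
Qed.

Definition extremal_level (r : rel R) (Q : D -> set R) (z : D) (g : R) :=
  is_level z g /\ Q z g /\ forall g', is_level z g' -> Q z g' -> r g g'.

(* A function of the data alone, hence permutation invariant; xget returns 0 when no extremal
   level exists, which never happens under the hypotheses of the theorem. *)
Definition pick_level (r : rel R) (Q : D -> set R) (z : D) : R :=
  xget 0 (extremal_level r Q z).

Lemma pick_levelE [r Q z g] :
  antisymmetric r -> extremal_level r Q z g -> pick_level r Q z = g.
Proof.
move=> r_anti [g_lvl [Qg g_min]].
apply: xget_unique => [|g' [g'_lvl [Qg' g'_min]]]; first by split.
by apply: r_anti; rewrite g_min ?g'_min.
Qed.

Lemma pick_level_perm r Q (s : 'S_n.+1) z :
  Q (z \o s) = Q z -> pick_level r Q (z \o s) = pick_level r Q z.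
Proof. by move=> Qs; rewrite /pick_level /extremal_level is_level_perm Qs. Qed.

Variable alpha : R.

Definition talpha1 := pick_level <=%R (fun z g => alpha <= coverage z g).
Definition talpha2 := pick_level >=%R (fun z g => coverage z g < alpha).

Lemma talpha1_perm (s : 'S_n.+1) z : talpha1 (z \o s) = talpha1 z.
Proof. by apply: pick_level_perm; rewrite coverage_perm. Qed.

Lemma talpha2_perm (s : 'S_n.+1) z : talpha2 (z \o s) = talpha2 z.
Proof. by apply: pick_level_perm; rewrite coverage_perm. Qed.

Hypothesis V_meas : forall j, data_measurable (fun z => V z (z j)).
Hypothesis H_meas : forall i j, xdata_measurable (fun xs => H xs (xs i) (xs j)).

Local Notation DM := (data_mtype R n p).

Lemma measurable_score j : measurable_fun [set: DM] (fun z : DM => score z j).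
Proof. by move=> _ C mC; rewrite setTI; exact: V_meas. Qed.

Lemma measurable_xcoords :
  measurable_fun [set: DM] ((fun z k => (z k).1) : DM -> xdata_mtype R n p).
Proof.
apply: measurability; first by [].
move=> _ [B [A [mA ->]] <-]; rewrite setTI; apply: sub_gen_smallest.
exists A, (fun _ => setT); do 2 split => //.
by apply/seteqP; split => z /= h i; [split | case: (h i)].
Qed.

Lemma measurable_weight i j : measurable_fun [set: DM] (fun z : DM => weight z i j).
Proof.
have mloc k : measurable_fun [set: DM] (fun z : DM => loc z i k).
  have mH : measurable_fun [set: xdata_mtype R n p] (fun xs => H xs (xs i) (xs k)).
      by move=> _ C mC; rewrite setTI; exact: H_meas.
  exact: measurableT_comp mH measurable_xcoords.
apply: measurable_funM => //; apply: measurable_funV_ge1 (measurable_sum _ _) => // z.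
exact: loc_sum_ge1.
Qed.

Lemma measurable_mass_below i : measurable_fun [set: DM] (fun z : DM => mass_below z i).
Proof.
rewrite (_ : (fun z => _) = fun z : DM =>
    \sum_(j < n.+1) (if score z j < score z i then weight z i j else 0)); last first.
  by apply: funext => z; rewrite /mass_below big_mkcond.
apply: measurable_sum => j; apply: measurable_fun_ifT => //.
- exact: measurable_fun_ltr (measurable_score j) (measurable_score i).
- exact: measurable_weight.
Qed.

Lemma measurable_level c : measurable_fun [set: DM] (fun z : DM => level z c).
Proof.
case: c => [[i A]|] /=; last exact: measurable_cst.
rewrite (_ : (fun z => _) = fun z : DM =>
    \sum_(k < n.+1) (if k \in A then weight z i k else 0)); last first.
  by apply: funext => z; rewrite big_mkcond.
by apply: measurable_sum => k; case: (k \in A); [exact: measurable_weight | exact: measurable_cst].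
Qed.

Lemma measurable_nbelow (F : DM -> R) : measurable_fun [set: DM] F ->
  measurable_fun [set: DM] (fun z : DM => (nbelow z (F z))%:R : R).
Proof.
move=> mF; rewrite (_ : (fun z => _) = fun z : DM =>
    \sum_(i < n.+1) (if mass_below z i < F z then 1 else 0)); last first.
  by apply: funext => z; rewrite natr_sum; apply: eq_bigr => i _; case: (_ < _).
apply: measurable_sum => i; apply: measurable_fun_ifT => //.
exact: measurable_fun_ltr (measurable_mass_below i) mF.
Qed.

Lemma measurable_coverage (F : DM -> R) : measurable_fun [set: DM] F ->
  measurable_fun [set: DM] (fun z : DM => coverage z (F z)).
Proof.
move=> mF; under eq_fun do rewrite coverageE.
by apply: measurable_funM => //; exact: measurable_nbelow.
Qed.

Lemma measurable_extremal_level (r : rel R) (Q : D -> set R) c :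
  (forall c, measurable [set z : DM | Q z (level z c)]) ->
  (forall c c', measurable [set z : DM | r (level z c) (level z c')]) ->
  measurable [set z : DM | extremal_level r Q z (level z c)].
Proof.
move=> mQ mr.
suff -> : [set z : DM | extremal_level r Q z (level z c)] =
    [set z : DM | Q z (level z c)] `&` \bigcap_(c' in [set: cand])
      (~` [set z : DM | Q z (level z c')] `|` [set z : DM | r (level z c) (level z c')]).
  apply: measurableI => //; apply: fin_bigcap_measurable => // c' _.
  exact: measurableU (measurableC (mQ c')) (mr c c').
apply/seteqP; split => z /=.
- move=> [_ [Qc extc]]; split => // c' _ /=.
  by have [Qc'|nQc'] := pselect (Q z (level z c')); [right; apply: extc => //; exists c' | left].
- move=> [Qc extc]; split; first by exists c.
  by split => // _ [c' ->] Qc'; case: (extc c' I).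
Qed.

Lemma measurable_pick_level (r : rel R) (Q : D -> set R) (F : D -> R -> Prop) :
  antisymmetric r ->
  (forall c, measurable [set z : DM | extremal_level r Q z (level z c)]) ->
  (forall c, measurable [set z : DM | F z (level z c)]) ->
  measurable [set z : DM | F z (pick_level r Q z)].
Proof.
move=> r_anti mext mF.
suff -> : [set z : DM | F z (pick_level r Q z)] =
    \bigcup_(c in [set: cand])
      ([set z : DM | extremal_level r Q z (level z c)] `&` [set z : DM | F z (level z c)])
    `|` (\bigcap_(c in [set: cand]) ~` [set z : DM | extremal_level r Q z (level z c)]
      `&` [set z : DM | F z (level z None)]).
  apply: measurableU.
  - by apply: fin_bigcup_measurable => // c _; exact: measurableI.
  - apply: measurableI => //; apply: fin_bigcap_measurable => // c _.
    exact: measurableC.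
apply/seteqP; split => z /=.
- have [[c extc]|noext] := pselect (exists c, extremal_level r Q z (level z c)).
    by rewrite (pick_levelE r_anti extc) => Fc; left; exists c.
  rewrite /pick_level xgetPN => [F0|g extg].
    by right; split => // c _ /= ?; apply: noext; exists c.
  by have [c gc] := extg.1; apply: noext; exists c; rewrite -gc.
- case=> [[c _ [extc Fc]]|[noext F0]]; first by rewrite (pick_levelE r_anti extc).
  rewrite /pick_level xgetPN // => g extg; have [c gc] := extg.1.
  by apply: (noext c I); rewrite /= -gc.
Qed.

Lemma measurable_talpha1 (F : D -> R -> Prop) :
  (forall c, measurable [set z : DM | F z (level z c)]) ->
  measurable [set z : DM | F z (talpha1 z)].
Proof.
apply: measurable_pick_level; first exact: le_anti.
move=> c; apply: measurable_extremal_level => [c'|c' c''].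
- apply: measurable_set_bool; apply: measurable_fun_ler => //.
  exact: measurable_coverage (measurable_level c').
- by apply: measurable_set_bool; apply: measurable_fun_ler; exact: measurable_level.
Qed.

Lemma measurable_talpha2 (F : D -> R -> Prop) :
  (forall c, measurable [set z : DM | F z (level z c)]) ->
  measurable [set z : DM | F z (talpha2 z)].
Proof.
apply: measurable_pick_level; first exact: ge_anti.
move=> c; apply: measurable_extremal_level => [c'|c' c''].
- apply: measurable_set_bool; apply: measurable_fun_ltr => //.
  exact: measurable_coverage (measurable_level c').
- by apply: measurable_set_bool; apply: measurable_fun_ler; exact: measurable_level.
Qed.

Lemma measurable_nbelow_eq m c : measurable [set z : DM | nbelow z (level z c) = m].
Proof.
rewrite (_ : [set z | _] = [set z : DM | (nbelow z (level z c))%:R == m%:R :> R]).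
  apply: measurable_set_bool; apply: measurable_fun_eqr => //.
  exact: measurable_nbelow (measurable_level c).
by apply/seteqP; split => z /=; rewrite eqr_nat => /eqP.
Qed.

Lemma measurable_mass_below_lt i c : measurable [set z : DM | mass_below z i < level z c].
Proof.
apply/measurable_set_bool/measurable_fun_ltr; first exact: measurable_mass_below.
exact: measurable_level.
Qed.

Section randomized_level.
Context {d} {Omega : measurableType d} (P : probability Omega R).
Variables (X : 'I_n.+1 -> Omega -> 'rV[R]_p) (Y : 'I_n.+1 -> Omega -> R) (U : Omega -> R).
Hypothesis X_meas : forall i k, measurable_fun setT (fun w => X i w ord0 k).
Hypothesis Y_meas : forall i, measurable_fun setT (Y i).
Hypothesis U_meas : measurable_fun setT U.
Hypothesis Z_ident : forall (i : 'I_n.+1) (A : 'I_p -> set R) (B : set R),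
  (forall k, measurable (A k)) -> measurable B ->
  P (Zevent X Y i A B) = P (Zevent X Y ord0 A B).
Hypothesis ZU_indep : forall (A : 'I_n.+1 -> 'I_p -> set R) (B : 'I_n.+1 -> set R) (C : set R),
  (forall i k, measurable (A i k)) -> (forall i, measurable (B i)) -> measurable C ->
  P (\bigcap_(i in [set: 'I_n.+1]) Zevent X Y i (A i) (B i) `&` U @^-1` C) =
  ((\prod_(i < n.+1) P (Zevent X Y i (A i) (B i))) * P (U @^-1` C))%E.
Hypothesis U_unif : forall C : set R, measurable C ->
  P (U @^-1` C) = lebesgue_measure (C `&` `[0, 1]).
Local Notation Z := (data_of X Y).

Lemma measurable_preimage_U (C : set R) : measurable C -> measurable (U @^-1` C).
Proof. by move=> mC; rewrite -[E in measurable E]setTI; exact: U_meas. Qed.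

Lemma measurable_preimage_data [S : set DM] : measurable S -> measurable (Z @^-1` S).
Proof.
by move=> mS; rewrite -[E in measurable E]setTI; exact: measurable_data_of.
Qed.

Lemma prob_rect_perm (s : 'S_n.+1) [A : 'I_n.+1 -> 'I_p -> set R] [B : 'I_n.+1 -> set R] :
  (forall i k, measurable (A i k)) -> (forall i, measurable (B i)) ->
  P (\bigcap_(i in [set: 'I_n.+1]) Zevent X Y (s i) (A i) (B i)) =
  (\prod_(i < n.+1) P (Zevent X Y ord0 (A i) (B i)))%E.
Proof.
move=> mA mB.
rewrite (_ : \bigcap_(i in _) _ =
    \bigcap_(i in [set: 'I_n.+1]) Zevent X Y i (A (s^-1 i)%g) (B (s^-1 i)%g)); last first.
  apply/seteqP; split => w /= h i _; first by have := h (s^-1 i)%g I; rewrite permKV.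
  by have := h (s i) I; rewrite permK.
have := ZU_indep _ _ setT (fun i => mA (s^-1 i)%g) (fun i => mB (s^-1 i)%g) measurableT.
rewrite preimage_setT setIT probability_setT mule1 => ->.
under eq_bigr do rewrite Z_ident //.
by rewrite [LHS](reindex_inj (@perm_inj _ s)); under eq_bigr do rewrite /= permK.
Qed.

Lemma prob_data_perm_setI_unif (s : 'S_n.+1) [S : set DM] [C : set R] :
  measurable S -> measurable C ->
  P (Z @^-1` S `&` U @^-1` C) = (P ((fun w => Z w \o s) @^-1` S) * P (U @^-1` C))%E.
Proof.
move=> mS mC.
apply: (prob_preimage_setI_factor (T' := DM) P (G := @data_rects R n p)
  (g := fun w => Z w \o s) erefl data_rects_setI_closed data_rects_setT) => //.
- exact: measurable_data_of.
- exact: (measurable_data_of (X \o s) (Y \o s)) (fun i => X_meas (s i)) (fun i => Y_meas (s i)).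
- exact: measurable_preimage_U.
move=> _ [A [B [mA [mB ->]]]].
rewrite data_of_preimage_rect ZU_indep //.
rewrite (data_of_preimage_rect (X \o s) (Y \o s)) (prob_rect_perm s mA mB).
by congr (_ * _)%E; apply: eq_bigr => i _; exact: Z_ident.
Qed.

Lemma prob_data_perm (s : 'S_n.+1) [S : set DM] :
  measurable S -> P (Z @^-1` S) = P ((fun w => Z w \o s) @^-1` S).
Proof.
move=> mS; have := prob_data_perm_setI_unif s mS measurableT.
by rewrite preimage_setT setIT probability_setT mule1.
Qed.

Lemma prob_data_unif_indep [S : set DM] [C : set R] : measurable S -> measurable C ->
  P (Z @^-1` S `&` U @^-1` C) = (P (Z @^-1` S) * P (U @^-1` C))%E.
Proof.
move=> mS mC; rewrite (prob_data_perm_setI_unif 1%g mS mC).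
by congr (P _ * _)%E; apply/seteqP; split => w /=; rewrite (_ : Z w \o _ = Z w) //;
  apply/funext => i /=; rewrite perm1.
Qed.

Lemma prob_unif_le (c : R) : 0 <= c <= 1 -> P (U @^-1` `]-oo, c]) = c%:E.
Proof.
move=> /andP[c0 c1]; rewrite U_unif //.
rewrite (_ : _ `&` _ = `[0, c]%classic); last first.
  apply/seteqP; split => x /=; rewrite !in_itv /=; first by move=> [-> /andP[-> _]].
  by move=> /andP[-> xc]; split => //; exact: le_trans c1.
rewrite lebesgue_measure_itv /= lte_fin; case: ifPn => [_|]; first by rewrite oppr0 addr0.
by rewrite -leNgt => c_le0; have -> : c = 0 by apply/le_anti; rewrite c_le0 c0.
Qed.

Lemma prob_exchangeable_count (K : set DM) (T : 'I_n.+1 -> set DM) (m : nat) :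
  measurable K -> (forall i, measurable (T i)) ->
  (forall (s : 'S_n.+1) z, K (z \o s) <-> K z) ->
  (forall (s : 'S_n.+1) i z, T i (z \o s) <-> T (s i) z) ->
  (forall z, K z -> \sum_i \1_(T i) z = m%:R :> R) ->
  P (Z @^-1` (K `&` T ord_max)) = ((m%:R / n.+1%:R)%:E * P (Z @^-1` K))%E.
Proof.
move=> mK mT K_perm T_perm sumT.
(* Exchangeability gives the events K `&` T i equal probabilities, and on K their indicators
   add up to m. *)
have mKT i : measurable (K `&` T i) by exact: measurableI.
have same_prob i : P (Z @^-1` (K `&` T i)) = P (Z @^-1` (K `&` T ord_max)).
  rewrite (prob_data_perm (tperm i ord_max) (mKT i)); congr (P _).
  apply/seteqP; split => w /= [Kw Tw].
  - split; first exact: (K_perm _ _).1 Kw.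
    by have := (T_perm _ _ _).1 Tw; rewrite tpermL.
  - split; first exact: (K_perm (tperm i ord_max) _).2 Kw.
    by apply/(T_perm (tperm i ord_max)); rewrite tpermL.
have sum_indic w :
    \sum_i \1_(Z @^-1` (K `&` T i)) w = m%:R * \1_(Z @^-1` K) w :> R.
  have [Kw|nKw] := pselect (K (Z w)); last first.
    rewrite indicE memNset // mulr0 big1 // => i _.
    by rewrite indicE memNset // => -[].
  rewrite indicE mem_set // mulr1 -(sumT _ Kw); apply: eq_bigr => i _.
  have [Ti|nTi] := pselect (T i (Z w)); first by rewrite !indicE !mem_set.
  by rewrite !indicE !memNset // => -[].
have : (\sum_i P (Z @^-1` (K `&` T i)) = m%:R%:E * P (Z @^-1` K))%E.
  exact: measure_sum_indic (ler0n R m) (fun i => measurable_preimage_data (mKT i))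
    (measurable_preimage_data mK) sum_indic.
rewrite (eq_bigr _ (fun i _ => same_prob i)).
rewrite -(EFin_fine_prob P (measurable_preimage_data mK)).
rewrite -(EFin_fine_prob P (measurable_preimage_data (mKT ord_max))).
rewrite sumEFin sumr_const card_ord -EFinM => -[sum_eq]; rewrite -EFinM; congr EFin.
by rewrite -[_ *+ n.+1]mulr_natr in sum_eq; rewrite mulrAC -sum_eq mulfK // pnatr_eq0.
Qed.

Hypothesis talpha1_covers : forall w, alpha <= coverage (Z w) (talpha1 (Z w)).
Hypothesis talpha2_covers : forall w, coverage (Z w) (talpha2 (Z w)) < alpha.

(* ((n+1) alpha_1, (n+1) alpha_2) in the paper's notation. *)
Definition level_counts (z : D) : 'I_n.+2 * 'I_n.+2 :=
  (inord (nbelow z (talpha1 z)), inord (nbelow z (talpha2 z))).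

Lemma level_counts1 z : (level_counts z).1 = nbelow z (talpha1 z) :> nat.
Proof. by rewrite /= inordK // ltnS nbelow_le. Qed.

Lemma level_counts2 z : (level_counts z).2 = nbelow z (talpha2 z) :> nat.
Proof. by rewrite /= inordK // ltnS nbelow_le. Qed.

Lemma level_counts_perm (s : 'S_n.+1) z : level_counts (z \o s) = level_counts z.
Proof. by rewrite /level_counts talpha1_perm // talpha2_perm // !nbelow_perm. Qed.

Lemma measurable_level_counts k : measurable [set z : DM | level_counts z = k].
Proof.
rewrite (_ : [set z | _] = [set z : DM | nbelow z (talpha1 z) = k.1] `&`
                          [set z : DM | nbelow z (talpha2 z) = k.2]).
  apply: measurableI.
  - exact: (measurable_talpha1 (fun z g => nbelow z g = k.1)) (measurable_nbelow_eq _).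
  - exact: (measurable_talpha2 (fun z g => nbelow z g = k.2)) (measurable_nbelow_eq _).
apply/seteqP; split => z /=; first by move=> <-; rewrite -level_counts1 -level_counts2.
by case: k => k1 k2 /= [e1 e2]; rewrite /level_counts e1 e2 !inord_val.
Qed.

Lemma sum_indic_mass_below (a : D -> R) z :
  \sum_i \1_[set z : DM | mass_below z i < a z] z = (nbelow z (a z))%:R :> R.
Proof.
rewrite natr_sum; apply: eq_bigr => i _; rewrite indicE.
have [lt|nlt] := boolP (mass_below z i < a z); first by rewrite mem_set.
by rewrite memNset //=; exact/negP.
Qed.

Lemma coverage_talpha1 z : coverage z (talpha1 z) = (level_counts z).1%:R / n.+1%:R.
Proof. by rewrite coverageE level_counts1. Qed.

Lemma coverage_talpha2 z : coverage z (talpha2 z) = (level_counts z).2%:R / n.+1%:R.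
Proof. by rewrite coverageE level_counts2. Qed.

Definition mixing_weight (k : 'I_n.+2 * 'I_n.+2) : R :=
  (alpha - k.2%:R / n.+1%:R) / (k.1%:R / n.+1%:R - k.2%:R / n.+1%:R).

Definition mixture_event (k : 'I_n.+2 * 'I_n.+2) : set Omega :=
  Z @^-1` ([set z | level_counts z = k] `&` [set z | mass_below z ord_max < talpha1 z])
    `&` U @^-1` `]-oo, mixing_weight k]
  `|` Z @^-1` ([set z | level_counts z = k] `&` [set z | mass_below z ord_max < talpha2 z])
    `&` U @^-1` ~` `]-oo, mixing_weight k].

Lemma measurable_below_talpha1 i : measurable [set z : DM | mass_below z i < talpha1 z].
Proof.
exact: (measurable_talpha1 (fun z g => mass_below z i < g)) (measurable_mass_below_lt i).
Qed.

Lemma measurable_below_talpha2 i : measurable [set z : DM | mass_below z i < talpha2 z].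
Proof.
exact: (measurable_talpha2 (fun z g => mass_below z i < g)) (measurable_mass_below_lt i).
Qed.

Lemma prob_level_counts_below (a : D -> R) k m :
  (forall (s : 'S_n.+1) z, a (z \o s) = a z) ->
  (forall i, measurable [set z : DM | mass_below z i < a z]) ->
  (forall z, level_counts z = k -> nbelow z (a z) = m) ->
  P (Z @^-1` ([set z | level_counts z = k] `&` [set z | mass_below z ord_max < a z])) =
  ((m%:R / n.+1%:R)%:E * P (Z @^-1` [set z | level_counts z = k]))%E.
Proof.
move=> a_perm ma count_m; apply: (prob_exchangeable_count [set z | level_counts z = k]
  (fun i => [set z | mass_below z i < a z])) => [||s z|s i z|z zk] //.
- exact: measurable_level_counts.
- by rewrite /= level_counts_perm.
- by rewrite /= mass_below_perm a_perm.
- by rewrite sum_indic_mass_below count_m.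
Qed.

Lemma measurable_mixture_event k : measurable (mixture_event k).
Proof.
have mC : measurable (`]-oo, mixing_weight k]%classic : set R) by exact: measurable_itv.
have mK := measurable_level_counts k.
apply: measurableU; apply: measurableI.
- exact: measurable_preimage_data (measurableI _ _ mK (measurable_below_talpha1 _)).
- exact: measurable_preimage_U.
- exact: measurable_preimage_data (measurableI _ _ mK (measurable_below_talpha2 _)).
- exact: measurable_preimage_U (measurableC mC).
Qed.

Lemma prob_mixture_event k :
  P (mixture_event k) = (alpha%:E * P (Z @^-1` [set z | level_counts z = k]))%E.
Proof.
set K := [set z | level_counts z = k].
have [[w Kw]|noK] := pselect (exists w, K (Z w)); last first.
  rewrite (_ : Z @^-1` K = set0); last by apply/seteqP; split => // w Kw; apply: noK; exists w.
  rewrite (_ : mixture_event k = set0) ?measure0 ?mule0 //.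
  by apply/seteqP; split => // w [] [[Kw _] _]; apply: noK; exists w.
have a1_ge : alpha <= k.1%:R / n.+1%:R by rewrite -Kw -coverage_talpha1.
have a2_lt : k.2%:R / n.+1%:R < alpha by rewrite -Kw -coverage_talpha2.
have a12 : 0 < (k.1%:R / n.+1%:R - k.2%:R / n.+1%:R :> R).
  by rewrite subr_gt0 (lt_le_trans a2_lt).
have mix01 : 0 <= mixing_weight k <= 1.
  rewrite /mixing_weight ler_pdivrMr // mul1r lerD2r a1_ge andbT.
  by apply: divr_ge0; [rewrite subr_ge0 ltW | exact: ltW].
set C : set R := `]-oo, mixing_weight k]%classic.
set S1 : set DM := K `&` [set z | mass_below z ord_max < talpha1 z].
set S2 : set DM := K `&` [set z | mass_below z ord_max < talpha2 z].
have mC : measurable C by exact: measurable_itv.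
have mK := measurable_level_counts k.
have mS1 : measurable S1 by exact: measurableI mK (measurable_below_talpha1 _).
have mS2 : measurable S2 by exact: measurableI mK (measurable_below_talpha2 _).
have -> : P (mixture_event k) =
    (P (Z @^-1` S1 `&` U @^-1` C) + P (Z @^-1` S2 `&` U @^-1` ~` C))%E.
  rewrite measureU //.
  - by apply: measurableI; [exact: measurable_preimage_data | exact: measurable_preimage_U].
  - apply: measurableI; first exact: measurable_preimage_data.
    exact/measurable_preimage_U/measurableC.
  - by apply/seteqP; split => // w' [[_ Cw] [_ nCw]].
have PnC : P (Z @^-1` S2 `&` U @^-1` ~` C) = (P (Z @^-1` S2) * (1 - P (U @^-1` C)))%E.
  rewrite prob_data_unif_indep //; last exact: measurableC.
  congr (_ * _)%E.
  rewrite (_ : (U @^-1` ~` C) = (~` (U @^-1` C))) // probability_setC //.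
  exact: measurable_preimage_U.
rewrite PnC prob_data_unif_indep //.
rewrite (prob_level_counts_below _ k k.1 talpha1_perm measurable_below_talpha1); last first.
  by move=> z <-; rewrite level_counts1.
rewrite (prob_level_counts_below _ k k.2 talpha2_perm measurable_below_talpha2); last first.
  by move=> z <-; rewrite level_counts2.
rewrite prob_unif_le //.
rewrite -(EFin_fine_prob P (measurable_preimage_data (measurable_level_counts k))).
rewrite -!EFinM -EFinD; congr EFin.
move: a12; rewrite /mixing_weight; set a := k.1%:R / n.+1%:R; set b := k.2%:R / n.+1%:R.
by move=> /lt0r_neq0 ab; field.
Qed.

Lemma prob_below_randomized_level :
  P [set w | mass_below (Z w) ord_max <
     (if U w <= (alpha - coverage (Z w) (talpha2 (Z w))) /
                (coverage (Z w) (talpha1 (Z w)) - coverage (Z w) (talpha2 (Z w)))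
      then talpha1 (Z w) else talpha2 (Z w))] = alpha%:E.
Proof.
set E := [set w | _].
have in_mixture w : mixture_event (level_counts (Z w)) w <-> E w.
  rewrite /mixture_event /E /= in_itv /= coverage_talpha1 coverage_talpha2.
  case: ifPn => [U_le|U_gt]; split.
  - by case=> [[[_ lt] _]|[_ /(_ isT)]].
  - by left.
  - by case=> [[_ //]|[[_ lt] _]].
  - by right.
have mixture_counts w k : mixture_event k w -> k = level_counts (Z w).
  by case=> -[[<- _] _].
have E_bigcup : E = \bigcup_(k in [set: 'I_n.+2 * 'I_n.+2]) mixture_event k.
  apply/seteqP; split => w; first by move/in_mixture => Ew; exists (level_counts (Z w)).
  by case=> k _ mix_w; apply/in_mixture; rewrite -(mixture_counts _ _ mix_w).
have mE : measurable E.
  by rewrite E_bigcup; apply: fin_bigcup_measurable => // k _; exact: measurable_mixture_event.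
have PE : P E = (\sum_k P (mixture_event k))%E.
  rewrite (measure_sum_indic P ler01 measurable_mixture_event mE) ?mul1e // => w.
  by rewrite mul1r; exact: sum_indic_unique (mixture_counts w) (in_mixture w).
have total : (\sum_k P (Z @^-1` [set z | level_counts z = k]))%E = 1%E.
  rewrite (measure_sum_indic P ler01 _ measurableT) => [|k|w].
  - by rewrite mul1e; exact: probability_setT.
  - exact: measurable_preimage_data (measurable_level_counts k).
  - by rewrite mul1r; apply: sum_indic_unique => // k /= <-.
rewrite PE; under eq_bigr do rewrite prob_mixture_event.
by rewrite -ge0_sume_distrr ?total ?mule1 // => k _; exact: measure_ge0.
Qed.

End randomized_level.

End scores.

Theorem theorem2 (R : realType) (d : measure_display) (Omega : measurableType d)
  (P : probability Omega R) (n p : nat)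
  (X : 'I_n.+1 -> Omega -> 'rV[R]_p) (Y : 'I_n.+1 -> Omega -> R) (U : Omega -> R)
  (* measurability of the data and of the auxiliary randomization *)
  (hX : forall i k, measurable_fun setT (fun w => X i w ord0 k))
  (hY : forall i, measurable_fun setT (Y i))
  (hU : measurable_fun setT U)
  (* Z_1, ..., Z_(n+1) identically distributed *)
  (hid : forall (i : 'I_n.+1) (A : 'I_p -> set R) (B : set R),
     (forall k, measurable (A k)) -> measurable B ->
     P (Zevent X Y i A B) = P (Zevent X Y ord0 A B))
  (* Z_1, ..., Z_(n+1), U mutually independent *)
  (hind : forall (A : 'I_n.+1 -> 'I_p -> set R) (B : 'I_n.+1 -> set R) (C : set R),
     (forall i k, measurable (A i k)) -> (forall i, measurable (B i)) -> measurable C ->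
     P (\bigcap_(i in [set: 'I_n.+1]) Zevent X Y i (A i) (B i) `&` U @^-1` C) =
     ((\prod_(i < n.+1) P (Zevent X Y i (A i) (B i))) * P (U @^-1` C))%E)
  (* U ~ Uniform[0,1] *)
  (hUunif : forall C : set R, measurable C ->
     P (U @^-1` C) = lebesgue_measure (C `&` `[0, 1]))
  (* score function V(z; Zset), symmetric in the data *)
  (V : ('I_n.+1 -> 'rV[R]_p * R) -> 'rV[R]_p * R -> R)
  (hVsym : forall (s : 'S_n.+1) z t, V (z \o s) t = V z t)
  (hVmeas : forall j, data_measurable (fun z => V z (z j)))
  (* localizer H(x, x'; Xset), symmetric in the data *)
  (H : ('I_n.+1 -> 'rV[R]_p) -> 'rV[R]_p -> 'rV[R]_p -> R)
  (hHsym : forall (s : 'S_n.+1) xs x x', H (xs \o s) x x' = H xs x x')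
  (hH01 : forall xs x x', 0 <= H xs x x' <= 1)
  (hHdiag : forall xs x, H xs x x = 1)
  (hHmeas : forall i j, xdata_measurable (fun xs => H xs (xs i) (xs j)))
  (alpha : R) (halpha : 0 < alpha < 1)
  (at1 at2 : Omega -> R) :
  let z w := fun i => (X i w, Y i w) in
  let vs w := fun j => V (z w) (z w j) in
  let pm w := pH (fun i j => H (fun k => X k w) (X i w) (X j w)) in
  let G0 w := Gamma (pm w) `|` [set 0] in
  (* at1 = smallest value of Gamma u {0} with alpha_1 >= alpha *)
  (forall w, G0 w (at1 w) /\ alpha <= cov_frac (vs w) (pm w) (at1 w) /\
     forall g, G0 w g -> alpha <= cov_frac (vs w) (pm w) g -> at1 w <= g) ->
  (* at2 = largest value of Gamma u {0} with alpha_2 < alpha *)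
  (forall w, G0 w (at2 w) /\ cov_frac (vs w) (pm w) (at2 w) < alpha /\
     forall g, G0 w g -> cov_frac (vs w) (pm w) g < alpha -> g <= at2 w) ->
  let a1 w := cov_frac (vs w) (pm w) (at1 w) in
  let a2 w := cov_frac (vs w) (pm w) (at2 w) in
  (* randomized choice: at1 with probability (alpha - a2)/(a1 - a2), else at2 *)
  let atl w := if U w <= (alpha - a2 w) / (a1 w - a2 w) then at1 w else at2 w in
  P [set w | ((vs w ord_max)%:E <= Qd (pm w ord_max) (vals_inf (vs w)) (atl w))%E]
  = alpha%:E.
Proof.
move=> z vs pm G0 at1_min at2_max a1 a2 atl.
have H_ge0 xs x x' : 0 <= H xs x x' by have /andP[] := hH01 xs x x'.
have at1E w : at1 w = talpha1 V H alpha (data_of X Y w).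
  apply/esym/(pick_levelE H le_anti); have [at1_lvl [at1_cov at1_le]] := at1_min w.
  by split; [exact/is_levelE | split => // g /is_levelE; exact: at1_le].
have at2E w : at2 w = talpha2 V H alpha (data_of X Y w).
  apply/esym/(pick_levelE H ge_anti); have [at2_lvl [at2_cov at2_ge]] := at2_max w.
  by split; [exact/is_levelE | split => // g /is_levelE; exact: at2_ge].
have -> : [set w | ((vs w ord_max)%:E <= Qd (pm w ord_max) (vals_inf (vs w)) (atl w))%E] =
    [set w | mass_below V H (data_of X Y w) ord_max < atl w].
  apply: eq_set => w; rewrite le_QdE; last exact: weight_ge0 H H_ge0 hHdiag (z w) ord_max.
  by rewrite mass_below_vals_inf.
rewrite /atl /a1 /a2; under eq_set do rewrite at1E at2E.
apply: prob_below_randomized_level => // w; rewrite -?at1E -?at2E.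
- by have [_ []] := at1_min w.
- by have [_ []] := at2_max w.
Qed.
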